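(* There exist an S4 theorem $A$ and an LP formula $B$ such that $A$ has no prehistoric-cycle-free G3s proof, $B^\circ = A$, and $\mathrm{LP}(\mathrm{CS}^\odot)\vdash B$. Specifically, one may take $A := \Box(P\land\lnot\Box P\to P)\to\lnot\Box(P\land\lnot\Box P)$ and $B := y{:}(P\land\lnot (y\cdot x){:}P\to P)\to\lnot x{:}(P\land\lnot (y\cdot x){:}P)$, for an atom $P$ and distinct variables $x,y$.
   Context: LP terms: $t ::= c \mid x \mid t_0\cdot t_1 \mid t_0+t_1 \mid\ !t$; LP formulas: $A ::= \bot \mid P \mid A_0\to A_1 \mid t{:}A$; $\lnot A := A\to\bot$, $\land$ a classical abbreviation. LP: axioms A0 (classical propositional schemes), A1 $t{:}F\to F$, A2 $s{:}(F\to G)\to(t{:}F\to(s\cdot t){:}G)$, A3 $t{:}F\to\ !t{:}(t{:}F)$, A4 $s{:}F\to(s+t){:}F$, $t{:}F\to(s+t){:}F$; rules modus ponens and axiom necessitation ($A\vdash c{:}A$ for $A$ an axiom, $c$ a constant). A constant specification CS is a set of formulas $c{:}A$ with $c$ a constant and $A$ an axiom; LP(CS) restricts axiom necessitation to members of CS. CS is self-referential if there are $c_0{:}A_0,\dots,c_{n-1}{:}A_{n-1}\in\mathrm{CS}$ ($n\ge1$) with $c_{(k+1)\bmod n}$ occurring in $A_k$ for all $k$. $\mathrm{LP}(\mathrm{CS}^\odot)\vdash B$ means $\mathrm{LP}(\mathrm{CS})\vdash B$ for some non-self-referential CS. Forgetful projection: $(t{:}A)^\circ=\Box A^\circ$,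 commuting with $\to$, atoms, $\bot$. G3s is the cut-free sequent calculus for S4 with rules (Ax) $P,\Gamma\supset\Delta,P$; $(\bot\supset)$; $(\to\supset)$; $(\supset\to)$; $(\Box\supset)$ from $A,\Box A,\Gamma\supset\Delta$ infer $\Box A,\Gamma\supset\Delta$; $(\supset\Box)$ from $\Box\Gamma\supset A$ infer $\Gamma',\Box\Gamma\supset\Delta',\Box A$ (plus standard rules for $\lnot,\land$ if these are primitive). Families are equivalence classes of $\Box$-occurrences under correspondence (side-formula occurrences correspond from premise to conclusion; active formulas correspond to their topmost occurrence as subformula of the principal formula, symbolwise; closed reflexively, symmetrically, transitively). $i\prec j$ if some $(\supset\Box)$ rule whose principal $\Box A$ has outermost $\Box$ in family $j$ has a premise containing a $\Box$ of family $i$; a G3s proof is prehistoric-cycle-free if there is no $i_0\prec\cdots\prec i_{n-1}\prec i_0$ ($n\ge1$). A G3s proof of $A$ means a proof of the sequent $\supset A$. *)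

From Stdlib Require Import List Arith Relations.
Import ListNotations.

Inductive mform : Type :=
| MBot : mform
| MAtom : nat -> mform
| MImp : mform -> mform -> mform
| MBox : mform -> mform.

Definition mneg (A : mform) : mform := MImp A MBot.
Definition mand (A B : mform) : mform := mneg (MImp A (mneg B)).

Inductive s4_axiom : mform -> Prop :=
| s4_K1 A B : s4_axiom (MImp A (MImp B A))
| s4_S A B C : s4_axiom (MImp (MImp A (MImp B C)) (MImp (MImp A B) (MImp A C)))
| s4_DN A : s4_axiom (MImp (mneg (mneg A)) A)
| s4_K A B : s4_axiom (MImp (MBox (MImp A B)) (MImp (MBox A) (MBox B)))
| s4_T A : s4_axiom (MImp (MBox A) A)
| s4_4 A : s4_axiom (MImp (MBox A) (MBox (MBox A))).

Inductive s4_thm : mform -> Prop :=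
| s4_ax A : s4_axiom A -> s4_thm A
| s4_mp A B : s4_thm (MImp A B) -> s4_thm A -> s4_thm B
| s4_nec A : s4_thm A -> s4_thm (MBox A).

(* subformula at a position: 0 = left/only child, 1 = right child *)
Fixpoint msub (F : mform) (p : list nat) : option mform :=
  match p with
  | [] => Some F
  | d :: p' =>
      match F, d with
      | MImp a _, O => msub a p'
      | MImp _ b, S O => msub b p'
      | MBox a, O => msub a p'
      | _, _ => None
      end
  end.

(* sequent Gamma ⊃ Delta : (antecedent, succedent) *)
Definition seqt : Type := (list mform * list mform)%type.

Definition seq_side (s : seqt) (b : bool) : list mform :=
  if b then fst s else snd s.  (* true = antecedent, false = succedent *)

(* rule descriptors; the nat is the index of the principal formula *)
Inductive g3rule : Type :=
| RAx : g3rule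
| RBotL : g3rule
| RImpL : nat -> g3rule
| RImpR : nat -> g3rule
| RBoxL : nat -> g3rule
| RBoxR : list nat -> nat -> g3rule.  (* selected indices of []Gamma, principal index *)

Definition rule_ok (r : g3rule) (s : seqt) (prem : list seqt) : Prop :=
  let G := fst s in let D := snd s in
  match r with
  | RAx => prem = [] /\
      exists i j p, nth_error G i = Some (MAtom p) /\ nth_error D j = Some (MAtom p)
  | RBotL => prem = [] /\ exists i, nth_error G i = Some MBot
  | RImpL n => exists a b, nth_error G n = Some (MImp a b) /\
      prem = [ (firstn n G ++ skipn (S n) G, D ++ [a]) ;
               (firstn n G ++ b :: skipn (S n) G, D) ]
  | RImpR n => exists a b, nth_error D n = Some (MImp a b) /\
      prem = [ (a :: G, firstn n D ++ b :: skipn (S n) D) ]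
  | RBoxL n => exists a, nth_error G n = Some (MBox a) /\
      prem = [ (firstn n G ++ a :: MBox a :: skipn (S n) G, D) ]
  | RBoxR sel n => exists a, nth_error D n = Some (MBox a) /\ NoDup sel /\
      (forall k, In k sel -> exists c, nth_error G k = Some (MBox c)) /\
      prem = [ (map (fun k => nth k G MBot) sel, [a]) ]
  end.

(* Correspondence from the formula at (side b, index i) of premise number k
   to (side, index, position-prefix) in the conclusion.  Side formulas map
   to themselves (prefix []), active formulas to their occurrence as
   subformula of the principal formula. *)
Definition origin (r : g3rule) (s : seqt) (k : nat) (b : bool) (i : nat)
  : option (bool * nat * list nat) :=
  let G := fst s in let D := snd s in
  match r, k with
  | RImpL n, O =>
      if b then (if i <? n then Some (true, i, []) else Some (true, S i, []))
      else (if i <? length D then Some (false, i, [])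
            else if i =? length D then Some (true, n, [0]) else None)
  | RImpL n, S O =>
      if b then (if i =? n then Some (true, n, [1]) else Some (true, i, []))
      else Some (false, i, [])
  | RImpR n, O =>
      if b then (match i with O => Some (false, n, [0]) | S i' => Some (true, i', []) end)
      else (if i =? n then Some (false, n, [1]) else Some (false, i, []))
  | RBoxL n, O =>
      if b then (if i <? n then Some (true, i, [])
                 else if i =? n then Some (true, n, [0])
                 else if i =? S n then Some (true, n, [])
                 else Some (true, pred i, []))
      else Some (false, i, [])
  | RBoxR sel n, O =>
      if b then Some (true, nth i sel 0, [])
      else (match i with O => Some (false, n, [0]) | _ => None end)
  | _, _ => None
  end.

Inductive ptree : Type :=
| PNode : seqt -> g3rule -> list ptree -> ptree.

Definition root (t : ptree) : seqt := match t with PNode s _ _ => s end.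

Fixpoint valid (t : ptree) : Prop :=
  match t with
  | PNode s r ch =>
      rule_ok r s (map root ch) /\
      (fix all (l : list ptree) : Prop :=
         match l with [] => True | t' :: l' => valid t' /\ all l' end) ch
  end.

Fixpoint subtree_at (t : ptree) (q : list nat) : option ptree :=
  match q with
  | [] => Some t
  | k :: q' =>
      match t with
      | PNode _ _ ch =>
          match nth_error ch k with Some t' => subtree_at t' q' | None => None end
      end
  end.

(* an occurrence: node (path from the root), side, formula index, position *)
Record occ : Type := Occ { o_node : list nat; o_side : bool; o_idx : nat; o_pos : list nat }.

Definition box_occ (t : ptree) (o : occ) : Prop :=
  exists t' F A, subtree_at t (o_node o) = Some t' /\
    nth_error (seq_side (root t') (o_side o)) (o_idx o) = Some F /\
    msub F (o_pos o) = Some (MBox A).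

(* one-step correspondence: o1 in a premise, o2 in the conclusion *)
Definition corr1 (t : ptree) (o1 o2 : occ) : Prop :=
  box_occ t o1 /\ box_occ t o2 /\
  exists q k s r ch b' i' pre,
    subtree_at t q = Some (PNode s r ch) /\
    o_node o1 = q ++ [k] /\ o_node o2 = q /\
    origin r s k (o_side o1) (o_idx o1) = Some (b', i', pre) /\
    o_side o2 = b' /\ o_idx o2 = i' /\ o_pos o2 = pre ++ o_pos o1.

Definition same_family (t : ptree) : relation occ := clos_refl_sym_trans occ (corr1 t).

Definition prec (t : ptree) (o1 o2 : occ) : Prop :=
  exists q s sel n ch,
    subtree_at t q = Some (PNode s (RBoxR sel n) ch) /\
    same_family t o2 (Occ q false n []) /\
    exists o, box_occ t o /\ o_node o = q ++ [0] /\ same_family t o1 o.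

Definition prehistoric_cycle_free (t : ptree) : Prop :=
  ~ exists o, clos_trans occ (prec t) o o.

Definition has_pcf_g3s_proof (A : mform) : Prop :=
  exists t, valid t /\ root t = ([], [A]) /\ prehistoric_cycle_free t.

Inductive lterm : Type :=
| LConst : nat -> lterm
| LVar : nat -> lterm
| LApp : lterm -> lterm -> lterm
| LSum : lterm -> lterm -> lterm
| LBang : lterm -> lterm.

Inductive lform : Type :=
| LBot : lform
| LAtom : nat -> lform
| LImp : lform -> lform -> lform
| LPf : lterm -> lform -> lform.   (* t : A *)

Definition lneg (A : lform) : lform := LImp A LBot.
Definition land (A B : lform) : lform := lneg (LImp A (lneg B)).

Inductive lp_axiom : lform -> Prop :=
| lp_K1 A B : lp_axiom (LImp A (LImp B A))
| lp_S A B C : lp_axiom (LImp (LImp A (LImp B C)) (LImp (LImp A B) (LImp A C)))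
| lp_DN A : lp_axiom (LImp (lneg (lneg A)) A)
| lp_A1 t F : lp_axiom (LImp (LPf t F) F)
| lp_A2 s t F G : lp_axiom (LImp (LPf s (LImp F G)) (LImp (LPf t F) (LPf (LApp s t) G)))
| lp_A3 t F : lp_axiom (LImp (LPf t F) (LPf (LBang t) (LPf t F)))
| lp_A4l s t F : lp_axiom (LImp (LPf s F) (LPf (LSum s t) F))
| lp_A4r s t F : lp_axiom (LImp (LPf t F) (LPf (LSum s t) F)).

(* a constant specification: a set of pairs (c, A), read as c:A *)
Definition const_spec : Type := nat -> lform -> Prop.

Definition is_CS (CS : const_spec) : Prop := forall c A, CS c A -> lp_axiom A.

Inductive lp_deriv (CS : const_spec) : lform -> Prop :=
| ld_ax A : lp_axiom A -> lp_deriv CS A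
| ld_mp A B : lp_deriv CS (LImp A B) -> lp_deriv CS A -> lp_deriv CS B
| ld_nec c A : CS c A -> lp_deriv CS (LPf (LConst c) A).

Fixpoint tconst_in (c : nat) (t : lterm) : Prop :=
  match t with
  | LConst d => c = d
  | LVar _ => False
  | LApp s u | LSum s u => tconst_in c s \/ tconst_in c u
  | LBang s => tconst_in c s
  end.

Fixpoint fconst_in (c : nat) (A : lform) : Prop :=
  match A with
  | LBot | LAtom _ => False
  | LImp a b => fconst_in c a \/ fconst_in c b
  | LPf t a => tconst_in c t \/ fconst_in c a
  end.

Definition self_referential (CS : const_spec) : Prop :=
  exists (n : nat) (c : nat -> nat) (F : nat -> lform),
    0 < n /\ (forall k, k < n -> CS (c k) (F k)) /\
    (forall k, k < n -> fconst_in (c (S k mod n)) (F k)).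

Definition lp_nonselfref_provable (B : lform) : Prop :=
  exists CS, is_CS CS /\ ~ self_referential CS /\ lp_deriv CS B.

Fixpoint forget (A : lform) : mform :=
  match A with
  | LBot => MBot
  | LAtom p => MAtom p
  | LImp a b => MImp (forget a) (forget b)
  | LPf _ a => MBox (forget a)
  end.

Definition A_ex (P : nat) : mform :=
  MImp (MBox (MImp (mand (MAtom P) (mneg (MBox (MAtom P)))) (MAtom P)))
       (mneg (MBox (mand (MAtom P) (mneg (MBox (MAtom P)))))).

Definition B_ex (P x y : nat) : lform :=
  LImp (LPf (LVar y) (LImp (land (LAtom P) (lneg (LPf (LApp (LVar y) (LVar x)) (LAtom P))))
                          (LAtom P)))
       (lneg (LPf (LVar x) (land (LAtom P) (lneg (LPf (LApp (LVar y) (LVar x)) (LAtom P)))))).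

(* The S4 theorem [A] and its realization [B] are derived from [□(C → P)] and
   [□C], with [C = P ∧ ¬□P], by K (resp. A2) and T (resp. A1); [B] needs no
   constant at all, so its constant specification is empty.

   In a G3s proof of [⊃ A], every box occurrence descends to an occurrence in
   [A] of the same polarity, and [A] has a single positive box: the [□P] in
   [¬□C].  If some right box rule carries [□C] into its premise, its principal
   box and the [□P] inside the carried [□C] are both positive, hence in one
   family, which then precedes itself.  Otherwise erasing the boxes in front of
   [C] keeps the proof sound in every S4 model, yet the erased [A] fails at the
   root of a two-world model. *)

From Stdlib Require Import List Arith Bool Relations Classical Lia.
Import ListNotations.

(** * Hilbert-style derivability of [A] and [B] *)

Section HilbertDeduction.

Variables (form : Type) (imp : form -> form -> form) (bot : form) (axiom : form -> Prop).
Hypothesis axiom_K : forall A B, axiom (imp A (imp B A)).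
Hypothesis axiom_S : forall A B C, axiom (imp (imp A (imp B C)) (imp (imp A B) (imp A C))).

Inductive derives (H : list form) : form -> Prop :=
| derives_hyp A : In A H -> derives H A
| derives_axiom A : axiom A -> derives H A
| derives_mp A B : derives H (imp A B) -> derives H A -> derives H B.

Lemma derives_imp_refl H A : derives H (imp A A).
Proof.
  apply (derives_mp _ (imp A (imp A A))); [|apply derives_axiom, axiom_K].
  apply (derives_mp _ (imp A (imp (imp A A) A))); apply derives_axiom; auto.
Qed.

Lemma deduction H A B : derives (A :: H) B -> derives H (imp A B).
Proof.
  induction 1 as [C [<-|HC]|C HC|C E _ IHCE _ IHC].
  - apply derives_imp_refl.
  - apply (derives_mp _ C); [apply derives_axiom, axiom_K|now apply derives_hyp].
  - apply (derives_mp _ C); [apply derives_axiom, axiom_K|now apply derives_axiom].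
  - apply (derives_mp _ (imp A C)); [|exact IHC].
    apply (derives_mp _ (imp A (imp C E))); [apply derives_axiom, axiom_S|exact IHCE].
Qed.

Lemma derives_weaken H H' A : incl H H' -> derives H A -> derives H' A.
Proof.
  intros Hincl. induction 1.
  - apply derives_hyp; auto.
  - now apply derives_axiom.
  - eapply derives_mp; eassumption.
Qed.

Lemma derives_and_not_absurd H a b :
  derives H b -> derives H (imp (imp a (imp (imp b bot) bot)) bot) -> derives H bot.
Proof.
  intros Hb Hconj. apply (derives_mp _ _ _ Hconj).
  apply deduction, deduction.
  apply (derives_mp _ b); [now apply derives_hyp; left|].
  apply (derives_weaken H); [intros z Hz; now right; right|exact Hb].
Qed.

End HilbertDeduction.

Arguments derives {form} imp axiom H _.
Arguments derives_hyp {form imp axiom H A}.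
Arguments derives_axiom {form imp axiom H A}.
Arguments derives_mp {form imp axiom H} A {B}.
Arguments deduction {form imp axiom} axiom_K axiom_S {H A B}.
Arguments derives_and_not_absurd {form imp bot axiom} axiom_K axiom_S {H} a {b}.

Lemma s4_thm_of_derives A : derives MImp s4_axiom [] A -> s4_thm A.
Proof.
  induction 1 as [A []|A HA|A B _ IHAB _ IHA]; [now apply s4_ax|exact (s4_mp _ _ IHAB IHA)].
Qed.

Lemma lp_deriv_of_derives CS A : derives LImp lp_axiom [] A -> lp_deriv CS A.
Proof.
  induction 1 as [A []|A HA|A B _ IHAB _ IHA]; [now apply ld_ax|exact (ld_mp _ _ _ IHAB IHA)].
Qed.

Definition C_ex (P : nat) : mform := mand (MAtom P) (mneg (MBox (MAtom P))).

Theorem A_ex_s4_thm P : s4_thm (A_ex P).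
Proof.
  apply s4_thm_of_derives, (deduction s4_K1 s4_S), (deduction s4_K1 s4_S).
  apply (derives_and_not_absurd s4_K1 s4_S (MAtom P) (b := MBox (MAtom P))).
  - apply (derives_mp (MBox (C_ex P))); [|now apply derives_hyp; left].
    apply (derives_mp (MBox (MImp (C_ex P) (MAtom P))));
      [apply derives_axiom, s4_K|now apply derives_hyp; right; left].
  - apply (derives_mp (MBox (C_ex P))); [apply derives_axiom, s4_T|now apply derives_hyp; left].
Qed.

Definition empty_cs : const_spec := fun _ _ => False.

Lemma empty_cs_not_self_referential : ~ self_referential empty_cs.
Proof. intros (n & c & F & Hn & HF & _). exact (HF 0 Hn). Qed.

Theorem B_ex_lp_provable P x y : lp_nonselfref_provable (B_ex P x y).
Proof.
  exists empty_cs. split; [intros c A []|split; [exact empty_cs_not_self_referential|]].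
  unfold B_ex. apply lp_deriv_of_derives, (deduction lp_K1 lp_S), (deduction lp_K1 lp_S).
  set (C := land (LAtom P) (lneg (LPf (LApp (LVar y) (LVar x)) (LAtom P)))).
  apply (derives_and_not_absurd lp_K1 lp_S (LAtom P) (b := LPf (LApp (LVar y) (LVar x)) (LAtom P))).
  - apply (derives_mp (LPf (LVar x) C)); [|now apply derives_hyp; left].
    apply (derives_mp (LPf (LVar y) (LImp C (LAtom P))));
      [apply derives_axiom, lp_A2|now apply derives_hyp; right; left].
  - apply (derives_mp (LPf (LVar x) C)); [apply derives_axiom, lp_A1|now apply derives_hyp; left].
Qed.

(** * Tracing box occurrences to the root *)

Lemma nth_error_remove {X} (l : list X) n i : n < length l ->
  nth_error (firstn n l ++ skipn (S n) l) i = nth_error l (if i <? n then i else S i).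
Proof.
  revert l i; induction n as [|n IH]; intros [|x l] i Hn; simpl in *; try lia.
  - destruct i; reflexivity.
  - destruct i as [|i]; [reflexivity|]. simpl. rewrite IH by lia.
    destruct (Nat.ltb_spec i n), (Nat.ltb_spec (S i) (S n)); reflexivity || lia.
Qed.

Lemma nth_error_replace {X} (l : list X) n i x : n < length l ->
  nth_error (firstn n l ++ x :: skipn (S n) l) i = if i =? n then Some x else nth_error l i.
Proof.
  revert l i; induction n as [|n IH]; intros [|y l] i Hn; simpl in *; try lia.
  - destruct i; reflexivity.
  - destruct i as [|i]; [reflexivity|]. simpl. apply IH. lia.
Qed.

Lemma nth_error_replace2 {X} (l : list X) n i x y : n < length l ->
  nth_error (firstn n l ++ x :: y :: skipn (S n) l) i =
  if i <? n then nth_error l i else if i =? n then Some x else if i =? S n then Some y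
  else nth_error l (pred i).
Proof.
  revert l i; induction n as [|n IH]; intros [|z l] i Hn; simpl in *; try lia.
  - destruct i as [|[|i]]; reflexivity.
  - destruct i as [|i]; [reflexivity|]. simpl. rewrite IH by lia.
    destruct i; [|reflexivity]. destruct n; reflexivity.
Qed.

Lemma nth_error_snoc {X} (l : list X) x i :
  nth_error (l ++ [x]) i =
  if i <? length l then nth_error l i else if i =? length l then Some x else None.
Proof.
  revert i; induction l as [|y l IH]; intros i; simpl.
  - destruct i as [|[|i]]; reflexivity.
  - destruct i; simpl; auto.
Qed.

Lemma nth_error_lt {X} (l : list X) n x : nth_error l n = Some x -> n < length l.
Proof. intros H. apply nth_error_Some. congruence. Qed.

Lemma In_remove_nth {X} (l : list X) n x y :
  nth_error l n = Some x -> In y (firstn n l ++ skipn (S n) l) -> In y l.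
Proof.
  intros Hn Hy. rewrite <- (firstn_skipn_middle n l Hn).
  apply in_app_or in Hy as [Hy|Hy]; apply in_or_app; auto using in_cons.
Qed.

Lemma In_replace_nth {X} (l : list X) n x y z :
  nth_error l n = Some x -> In y (firstn n l ++ z :: skipn (S n) l) -> y = z \/ In y l.
Proof.
  intros Hn Hy. rewrite <- (firstn_skipn_middle n l Hn).
  apply in_app_or in Hy as [Hy|[<-|Hy]]; auto; right; apply in_or_app; auto using in_cons.
Qed.

Lemma In_replace2_nth {X} (l : list X) n x y z u :
  nth_error l n = Some x -> In y (firstn n l ++ z :: u :: skipn (S n) l) ->
  y = z \/ y = u \/ In y l.
Proof.
  intros Hn Hy. rewrite <- (firstn_skipn_middle n l Hn).
  apply in_app_or in Hy as [Hy|[<-|[<-|Hy]]]; auto; right; right;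
    apply in_or_app; auto using in_cons.
Qed.

Fixpoint negative_at (F : mform) (p : list nat) {struct p} : bool :=
  match p with
  | [] => false
  | d :: p' =>
      match F, d with
      | MImp a _, O => negb (negative_at a p')
      | MImp _ b, S O => negative_at b p'
      | MBox a, O => negative_at a p'
      | _, _ => false
      end
  end.

Lemma msub_nil F : msub F [] = Some F.
Proof. now destruct F. Qed.

Lemma msub_app F p p' G : msub F p = Some G -> msub F (p ++ p') = msub G p'.
Proof.
  revert F; induction p as [|d p IH]; intros F H.
  - rewrite msub_nil in H. now injection H as ->.
  - destruct F, d as [|[|d]]; try discriminate; apply IH, H.
Qed.

Lemma negative_at_app F p p' G : msub F p = Some G ->
  negative_at F (p ++ p') = xorb (negative_at F p) (negative_at G p').
Proof.
  revert F; induction p as [|d p IH]; intros F H.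
  - rewrite msub_nil in H. injection H as ->. simpl. now destruct (negative_at G p').
  - destruct F, d as [|[|d]]; try discriminate; simpl; rewrite (IH _ H); auto.
    now destruct (negative_at F1 p), (negative_at G p').
Qed.

(* An occurrence on side [b] (antecedent when [true]) at a position where it is
   [negative_at] has signed polarity [xorb b negative_at]; [false] means positive. *)
Definition has_origin (r : g3rule) (s : seqt) (k : nat) (b : bool) (i : nat) (F : mform) : Prop :=
  exists b' i' pre F', origin r s k b i = Some (b', i', pre) /\
    nth_error (seq_side s b') i' = Some F' /\ msub F' pre = Some F /\
    xorb b' (negative_at F' pre) = b.

Ltac origin_found :=
  do 4 eexists; split; [reflexivity|]; split; [simpl; eassumption|]; simpl; auto using msub_nil.

Lemma origin_sound_boxR G D sel n a b i F :
  nth_error D n = Some (MBox a) ->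
  (forall k, In k sel -> exists c, nth_error G k = Some (MBox c)) ->
  nth_error (seq_side (map (fun k => nth k G MBot) sel, [a]) b) i = Some F ->
  has_origin (RBoxR sel n) (G, D) 0 b i F.
Proof.
  intros Hn Hsel Hi. unfold has_origin.
  destruct b; cbn [origin seq_side fst snd] in Hi |- *.
  - rewrite nth_error_map in Hi.
    destruct (nth_error sel i) as [j|] eqn:Hj; [injection Hi as <-|discriminate].
    rewrite (nth_error_nth _ _ _ Hj).
    destruct (Hsel j (nth_error_In _ _ Hj)) as [c Hc].
    rewrite (nth_error_nth _ _ _ Hc). origin_found.
  - destruct i as [|[|i]]; try discriminate. injection Hi as <-. origin_found.
Qed.

Lemma origin_sound r s prem k s' b i F :
  rule_ok r s prem -> nth_error prem k = Some s' -> nth_error (seq_side s' b) i = Some F ->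
  has_origin r s k b i F.
Proof.
  destruct s as [G D]. intros Hr Hk Hi. unfold has_origin.
  destruct r as [| |n|n|n|sel n]; cbn [rule_ok fst snd] in Hr.
  - destruct Hr as [-> _]. now destruct k.
  - destruct Hr as [-> _]. now destruct k.
  - destruct Hr as (a & a' & Hn & ->). pose proof (nth_error_lt _ _ _ Hn).
    remember (skipn (S n) G) as R eqn:ER.
    destruct k as [|[|[|k]]]; try discriminate; injection Hk as <-; subst R;
      destruct b; cbn [origin seq_side fst snd] in Hi |- *.
    + rewrite nth_error_remove in Hi by lia. destruct (i <? n); origin_found.
    + rewrite nth_error_snoc in Hi.
      destruct (i <? length D); [origin_found|].
      destruct (i =? length D); [injection Hi as <-; origin_found|discriminate].
    + rewrite nth_error_replace in Hi by lia.
      destruct (Nat.eqb_spec i n) as [->|]; [injection Hi as <-|]; origin_found.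
    + origin_found.
  - destruct Hr as (a & a' & Hn & ->). pose proof (nth_error_lt _ _ _ Hn).
    remember (skipn (S n) D) as R eqn:ER.
    destruct k as [|[|k]]; try discriminate; injection Hk as <-; subst R;
      destruct b; cbn [origin seq_side fst snd] in Hi |- *.
    + destruct i as [|i]; [injection Hi as <-|]; origin_found.
    + rewrite nth_error_replace in Hi by lia.
      destruct (Nat.eqb_spec i n) as [->|]; [injection Hi as <-|]; origin_found.
  - destruct Hr as (a & Hn & ->). pose proof (nth_error_lt _ _ _ Hn).
    remember (skipn (S n) G) as R eqn:ER.
    destruct k as [|[|k]]; try discriminate; injection Hk as <-; subst R;
      destruct b; cbn [origin seq_side fst snd] in Hi |- *; [|origin_found].
    rewrite nth_error_replace2 in Hi by lia.
    destruct (i <? n); [origin_found|].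
    destruct (i =? n); [injection Hi as <-; origin_found|].
    destruct (i =? S n); [injection Hi as <-|]; origin_found.
  - destruct Hr as (a & Hn & _ & Hsel & ->).
    destruct k as [|[|k]]; try discriminate; injection Hk as <-.
    exact (origin_sound_boxR _ _ _ _ _ _ _ _ Hn Hsel Hi).
Qed.

Lemma subtree_at_snoc_inv t q k u : subtree_at t (q ++ [k]) = Some u ->
  exists s r ch, subtree_at t q = Some (PNode s r ch) /\ nth_error ch k = Some u.
Proof.
  revert t; induction q as [|j q IH]; intros [s r ch] H; simpl in *.
  - exists s, r, ch. split; [reflexivity|].
    destruct (nth_error ch k) as [[]|]; simpl in H; congruence.
  - destruct (nth_error ch j); [auto|discriminate].
Qed.

Lemma subtree_at_snoc t q k s r ch u :
  subtree_at t q = Some (PNode s r ch) -> nth_error ch k = Some u -> subtree_at t (q ++ [k]) = Some u.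
Proof.
  revert t; induction q as [|j q IH]; intros [s0 r0 ch0] Hq Hk; simpl in *.
  - injection Hq as -> -> ->. rewrite Hk. now destruct u.
  - destruct (nth_error ch0 j); [eauto|discriminate].
Qed.

Lemma valid_PNode s r ch : valid (PNode s r ch) <-> rule_ok r s (map root ch) /\ Forall valid ch.
Proof.
  simpl. apply and_iff_compat_l.
  induction ch as [|c ch IH]; [split; auto|].
  rewrite Forall_cons_iff, IH. reflexivity.
Qed.

Lemma valid_child s r ch k u : valid (PNode s r ch) -> nth_error ch k = Some u -> valid u.
Proof.
  intros [_ Hch]%valid_PNode Hk. exact (proj1 (Forall_forall _ _) Hch u (nth_error_In _ _ Hk)).
Qed.

Lemma valid_subtree t q u : valid t -> subtree_at t q = Some u -> valid u.
Proof.
  revert t; induction q as [|j q IH]; intros [s r ch] Hv Hq; simpl in Hq.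
  - now injection Hq as <-.
  - destruct (nth_error ch j) eqn:Hj; [|discriminate].
    exact (IH _ (valid_child _ _ _ _ _ Hv Hj) Hq).
Qed.

Lemma box_occurrence_traces_to_root t A : valid t -> root t = ([], [A]) ->
  forall q u b i F pos X, subtree_at t q = Some u ->
  nth_error (seq_side (root u) b) i = Some F -> msub F pos = Some (MBox X) ->
  exists p, clos_refl_trans occ (corr1 t) (Occ q b i pos) (Occ [] false 0 p) /\
    msub A p = Some (MBox X) /\ xorb b (negative_at F pos) = negative_at A p.
Proof.
  intros Hv Hroot q. induction q as [|k q IH] using rev_ind; intros u b i F pos X Hu Hi Hm.
  - destruct t. injection Hu as <-. rewrite Hroot in Hi.
    destruct b, i as [|[|i]]; try discriminate. injection Hi as <-.
    exists pos. split; [apply rt_refl|auto].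
  - destruct (subtree_at_snoc_inv _ _ _ _ Hu) as (s & r & ch & Hq & Hk).
    pose proof (valid_subtree _ _ _ Hv Hq) as [Hrule _]%valid_PNode.
    assert (Hk' : nth_error (map root ch) k = Some (root u)) by now rewrite nth_error_map, Hk.
    destruct (origin_sound _ _ _ _ _ _ _ _ Hrule Hk' Hi)
      as (b' & i' & pre & F' & Ho & Hi' & Hm' & Hsign).
    assert (Hm2 : msub F' (pre ++ pos) = Some (MBox X)) by now rewrite (msub_app _ _ _ _ Hm').
    destruct (IH _ _ _ _ _ _ Hq Hi' Hm2) as (p & Hrt & HA & Hsign').
    exists p. split; [|split; [exact HA|]].
    + eapply rt_trans; [|exact Hrt]. apply rt_step.
      split; [exists u, F, X; auto|]. split; [exists (PNode s r ch), F', X; auto|].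
      exists q, k, s, r, ch, b', i', pre. repeat split; auto.
    + rewrite <- Hsign', (negative_at_app _ _ _ _ Hm'), <- Hsign.
      now destruct b', (negative_at F' pre), (negative_at F pos).
Qed.

Fixpoint box_positions (F : mform) : list (list nat) :=
  match F with
  | MBot | MAtom _ => []
  | MImp a b => map (cons 0) (box_positions a) ++ map (cons 1) (box_positions b)
  | MBox a => [] :: map (cons 0) (box_positions a)
  end.

Lemma msub_box_position F p X : msub F p = Some (MBox X) -> In p (box_positions F).
Proof.
  revert F; induction p as [|d p IH]; intros F H.
  - rewrite msub_nil in H. injection H as ->. now left.
  - destruct F, d as [|[|d]]; try discriminate; simpl; apply IH in H.
    + apply in_or_app. left. now apply in_map.
    + apply in_or_app. right. now apply in_map.
    + right. now apply in_map.
Qed.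

(* The position of [□P] in the consequent [¬□(P ∧ ¬□P)] of [A_ex P]. *)
Definition positive_box_of_A_ex : list nat := [1; 0; 0; 0; 1; 0; 0].

Lemma positive_box_of_A_ex_unique P p X :
  msub (A_ex P) p = Some (MBox X) -> negative_at (A_ex P) p = false -> p = positive_box_of_A_ex.
Proof.
  intros H Hneg. apply msub_box_position in H. simpl in H.
  repeat (destruct H as [<-|H]; [simpl in Hneg; first [discriminate | reflexivity]|]).
  destruct H.
Qed.

(** * Erasing the boxes in front of a formula *)

Definition mform_eq_dec (F G : mform) : {F = G} + {F <> G}.
Proof. decide equality; apply Nat.eq_dec. Defined.

Fixpoint erase_box (D F : mform) : mform :=
  match F with
  | MBox a => if mform_eq_dec a D then erase_box D a else MBox (erase_box D a)
  | MImp a b => MImp (erase_box D a) (erase_box D b)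
  | F => F
  end.

Lemma erase_box_same D : erase_box D (MBox D) = erase_box D D.
Proof. simpl. now destruct (mform_eq_dec D D). Qed.

Lemma erase_box_other D a : a <> D -> erase_box D (MBox a) = MBox (erase_box D a).
Proof. intros Ha. simpl. now destruct (mform_eq_dec a D). Qed.

Definition boxR_never_carries (D : mform) (t : ptree) : Prop :=
  forall q s sel n ch, subtree_at t q = Some (PNode s (RBoxR sel n) ch) ->
  forall k, In k sel -> nth k (fst s) MBot <> MBox D.

Lemma boxR_never_carries_child D s r ch j c :
  boxR_never_carries D (PNode s r ch) -> nth_error ch j = Some c -> boxR_never_carries D c.
Proof.
  intros H Hj q s' sel n ch' Hq. apply (H (j :: q) s' sel n ch'). simpl. now rewrite Hj.
Qed.

Definition ptree_ind_nested (Q : ptree -> Prop)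
  (H : forall s r ch, Forall Q ch -> Q (PNode s r ch)) : forall t, Q t :=
  fix go (t : ptree) : Q t :=
    match t with
    | PNode s r ch => H s r ch ((fix all (l : list ptree) : Forall Q l :=
        match l with [] => Forall_nil _ | c :: l' => Forall_cons _ (go c) (all l') end) ch)
    end.

Section ErasureSoundness.

Variables (W : Type) (R : W -> W -> Prop) (V : W -> nat -> Prop).
Hypothesis R_refl : forall w, R w w.
Hypothesis R_trans : forall u v w, R u v -> R v w -> R u w.

Fixpoint forces (w : W) (F : mform) : Prop :=
  match F with
  | MBot => False
  | MAtom p => V w p
  | MImp a b => forces w a -> forces w b
  | MBox a => forall v, R w v -> forces v a
  end.

Variable D : mform.

Definition forces_sequent (w : W) (s : seqt) : Prop :=
  (forall F, In F (fst s) -> forces w (erase_box D F)) ->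
  exists F, In F (snd s) /\ forces w (erase_box D F).

Lemma forces_erase_box_T w a : forces w (erase_box D (MBox a)) -> forces w (erase_box D a).
Proof.
  destruct (mform_eq_dec a D) as [->|Ha]; [now rewrite erase_box_same|].
  rewrite erase_box_other by exact Ha. intros H. exact (H w (R_refl w)).
Qed.

Lemma forces_erase_box_4 w v a : a <> D -> R w v ->
  forces w (erase_box D (MBox a)) -> forces v (erase_box D (MBox a)).
Proof.
  intros Ha Hwv. rewrite erase_box_other by exact Ha.
  intros H u Hvu. exact (H u (R_trans _ _ _ Hwv Hvu)).
Qed.

Lemma boxR_erase_sound G Δ sel n a w :
  nth_error Δ n = Some (MBox a) ->
  (forall k, In k sel -> exists c, nth_error G k = Some (MBox c)) ->
  (forall k, In k sel -> nth k G MBot <> MBox D) ->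
  (forall v, forces_sequent v (map (fun k => nth k G MBot) sel, [a])) ->
  forces_sequent w (G, Δ).
Proof.
  intros Hn Hsel Hnc Hprem HG. simpl in HG.
  assert (Ha : forall v, R w v -> forces v (erase_box D a)).
  { intros v Hwv. destruct (Hprem v) as (F & [<-|[]] & HFv); [|exact HFv].
    simpl. intros F (k & <- & Hk)%in_map_iff.
    destruct (Hsel k Hk) as [c Hc]. rewrite (nth_error_nth _ _ _ Hc).
    assert (HcD : c <> D) by (intros ->; exact (Hnc k Hk (nth_error_nth _ _ _ Hc))).
    exact (forces_erase_box_4 _ _ _ HcD Hwv (HG _ (nth_error_In _ _ Hc))). }
  exists (MBox a). split; [exact (nth_error_In _ _ Hn)|].
  destruct (mform_eq_dec a D) as [->|HaD].
  - rewrite erase_box_same. exact (Ha w (R_refl w)).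
  - rewrite erase_box_other by exact HaD. exact Ha.
Qed.

Lemma rule_erase_sound r s prem w :
  rule_ok r s prem ->
  (forall sel n, r = RBoxR sel n -> forall k, In k sel -> nth k (fst s) MBot <> MBox D) ->
  (forall s', In s' prem -> forall v, forces_sequent v s') ->
  forces_sequent w s.
Proof.
  destruct s as [G Δ]. intros Hr Hnc Hprem.
  destruct r as [| |n|n|n|sel n]; cbn [rule_ok fst snd] in Hr; intros HG; simpl in HG |- *.
  - destruct Hr as (_ & i & j & p & Hi & Hj).
    exists (MAtom p). split; [exact (nth_error_In _ _ Hj)|exact (HG _ (nth_error_In _ _ Hi))].
  - destruct Hr as (_ & i & Hi). destruct (HG _ (nth_error_In _ _ Hi)).
  - destruct Hr as (a & b & Hn & ->).
    pose proof (HG _ (nth_error_In _ _ Hn)) as Himp.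
    destruct (classic (forces w (erase_box D a))) as [Ha|Ha].
    + apply (Hprem _ (or_intror (or_introl eq_refl))). simpl.
      intros F HF. apply (In_replace_nth _ _ _ _ _ Hn) in HF as [->|HF]; auto.
    + destruct (Hprem _ (or_introl eq_refl) w) as (F & HF & HFw); simpl in *.
      * intros F HF. exact (HG F (In_remove_nth _ _ _ _ Hn HF)).
      * apply in_app_or in HF as [HF|[<-|[]]]; [now exists F|contradiction].
  - destruct Hr as (a & b & Hn & ->).
    destruct (classic (forces w (erase_box D a))) as [Ha|Ha].
    + destruct (Hprem _ (or_introl eq_refl) w) as (F & HF & HFw); simpl in *.
      * intros F [<-|HF]; auto.
      * apply (In_replace_nth _ _ _ _ _ Hn) in HF as [->|HF]; [|now exists F].
        exists (MImp a b). split; [exact (nth_error_In _ _ Hn)|]. now intros _.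
    + exists (MImp a b). split; [exact (nth_error_In _ _ Hn)|]. simpl. now intros Ha'.
  - destruct Hr as (a & Hn & ->).
    assert (Hbox := HG _ (nth_error_In _ _ Hn)).
    apply (Hprem _ (or_introl eq_refl)). simpl.
    intros F HF. apply (In_replace2_nth _ _ _ _ _ _ Hn) in HF as [->|[->|HF]]; auto.
    exact (forces_erase_box_T _ _ Hbox).
  - destruct Hr as (a & Hn & _ & Hsel & ->).
    exact (boxR_erase_sound _ _ _ _ _ _ Hn Hsel (Hnc sel n eq_refl)
             (Hprem _ (or_introl eq_refl)) HG).
Qed.

(* When no right box rule carries [□D] into its premise, erasing the boxes in
   front of [D] makes every G3s proof sound in all S4 models: a right box rule
   introducing [□D] only needs its premise at the current world. *)
Theorem erase_box_sound t :
  valid t -> boxR_never_carries D t -> forall w, forces_sequent w (root t).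
Proof.
  induction t as [s r ch IH] using ptree_ind_nested.
  intros Hv Hnc w. pose proof Hv as [Hr Hch]%valid_PNode.
  apply (rule_erase_sound r s (map root ch)); [exact Hr| |].
  - intros sel n -> k Hk. exact (Hnc [] s sel n ch eq_refl k Hk).
  - intros s' (c & <- & Hc)%in_map_iff v. apply In_nth_error in Hc as [j Hj].
    apply (proj1 (Forall_forall _ _) IH c (nth_error_In _ _ Hj)).
    + exact (valid_child _ _ _ _ _ Hv Hj).
    + exact (boxR_never_carries_child _ _ _ _ _ _ Hnc Hj).
Qed.

End ErasureSoundness.

Arguments forces {W} R V w F.

(** * No prehistoric-cycle-free proof of [A] *)

Lemma erase_box_A_ex P :
  erase_box (C_ex P) (A_ex P) = MImp (MBox (MImp (C_ex P) (MAtom P))) (mneg (C_ex P)).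
Proof.
  change (A_ex P) with (MImp (MBox (MImp (C_ex P) (MAtom P))) (MImp (MBox (C_ex P)) MBot)).
  change (erase_box (C_ex P) (MImp (MBox (MImp (C_ex P) (MAtom P))) (MImp (MBox (C_ex P)) MBot)))
    with (MImp (erase_box (C_ex P) (MBox (MImp (C_ex P) (MAtom P))))
               (MImp (erase_box (C_ex P) (MBox (C_ex P))) MBot)).
  rewrite erase_box_same. reflexivity.
Qed.

(* Two worlds [false ≤ true] with [P] true only at [false]: there [□(C → P)]
   and [C = P ∧ ¬□P] both hold. *)
Lemma erase_box_A_ex_refuted P :
  ~ forces Bool.le (fun w _ => w = false) false (erase_box (C_ex P) (A_ex P)).
Proof.
  rewrite erase_box_A_ex. simpl. intros H. apply H.
  - intros [|] _ HC; [exfalso; apply HC; discriminate|reflexivity].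
  - intros Himp. apply (Himp eq_refl). intros HboxP. discriminate (HboxP true I).
Qed.

Lemma positive_box_in_root_family P t q u b i F pos X :
  valid t -> root t = ([], [A_ex P]) -> subtree_at t q = Some u ->
  nth_error (seq_side (root u) b) i = Some F -> msub F pos = Some (MBox X) ->
  xorb b (negative_at F pos) = false ->
  same_family t (Occ q b i pos) (Occ [] false 0 positive_box_of_A_ex).
Proof.
  intros Hv Hroot Hu Hi Hm Hpos.
  destruct (box_occurrence_traces_to_root _ _ Hv Hroot _ _ _ _ _ _ _ Hu Hi Hm)
    as (p & Hrt & HA & Hsign).
  rewrite (positive_box_of_A_ex_unique P p X HA) in Hrt by congruence.
  exact (clos_rt_clos_rst _ _ _ _ Hrt).
Qed.

(* Both the principal [□a] of such a rule and the [□P] inside the carried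
   [□(C_ex P)] occur positively, so they lie in the single family of positive boxes. *)
Lemma boxR_carrying_C_ex_self_precedes P t q s sel n ch k :
  valid t -> root t = ([], [A_ex P]) -> subtree_at t q = Some (PNode s (RBoxR sel n) ch) ->
  In k sel -> nth k (fst s) MBot = MBox (C_ex P) ->
  prec t (Occ q false n []) (Occ q false n []).
Proof.
  destruct s as [G Δ]. intros Hv Hroot Hq Hk HC.
  pose proof (valid_subtree _ _ _ Hv Hq) as [Hrule _]%valid_PNode.
  destruct Hrule as (a & Hn & _ & _ & Hch).
  destruct ch as [|c0 [|]]; try discriminate. injection Hch as E0.
  destruct (In_nth_error _ _ Hk) as [i Hi].
  assert (Hc0 : subtree_at t (q ++ [0]) = Some c0)
    by exact (subtree_at_snoc _ _ 0 _ _ _ c0 Hq eq_refl).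
  assert (Hin : nth_error (seq_side (root c0) true) i = Some (MBox (C_ex P))).
  { rewrite E0. simpl. rewrite nth_error_map, Hi. simpl in HC. simpl. now rewrite HC. }
  assert (Hm : msub (MBox (C_ex P)) [0; 0; 1; 0; 0] = Some (MBox (MAtom P))) by reflexivity.
  exists q, (G, Δ), sel, n, [c0]. split; [exact Hq|]. split; [apply rst_refl|].
  exists (Occ (q ++ [0]) true i [0; 0; 1; 0; 0]).
  split; [exists c0, (MBox (C_ex P)), (MAtom P); auto|]. split; [reflexivity|].
  eapply rst_trans.
  - exact (positive_box_in_root_family P t q _ false n _ [] _ Hv Hroot Hq Hn (msub_nil _) eq_refl).
  - apply rst_sym.
    exact (positive_box_in_root_family P t _ _ true i _ _ _ Hv Hroot Hc0 Hin Hm eq_refl).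
Qed.

Theorem A_ex_no_pcf_proof P : ~ has_pcf_g3s_proof (A_ex P).
Proof.
  intros (t & Hv & Hroot & Hcf).
  assert (Hnc : boxR_never_carries (C_ex P) t).
  { intros q s sel n ch Hq k Hk HC. apply Hcf.
    exists (Occ q false n []). apply t_step.
    exact (boxR_carrying_C_ex_self_precedes P t q s sel n ch k Hv Hroot Hq Hk HC). }
  assert (bool_le_refl : forall b, Bool.le b b) by now intros [].
  assert (bool_le_trans : forall a b c, Bool.le a b -> Bool.le b c -> Bool.le a c)
    by now intros [] [] [].
  destruct (erase_box_sound bool Bool.le (fun w _ => w = false) bool_le_refl bool_le_trans
              (C_ex P) t Hv Hnc false) as (F & HF & HFw).
  - rewrite Hroot. intros F [].
  - rewrite Hroot in HF. destruct HF as [<-|[]]. exact (erase_box_A_ex_refuted P HFw).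
Qed.

Lemma forget_B_ex P x y : forget (B_ex P x y) = A_ex P.
Proof. reflexivity. Qed.

Theorem mainTheorem11 :
  (exists (A : mform) (B : lform),
      s4_thm A /\ ~ has_pcf_g3s_proof A /\ forget B = A /\ lp_nonselfref_provable B) /\
  (forall (P x y : nat), x <> y ->
      s4_thm (A_ex P) /\ ~ has_pcf_g3s_proof (A_ex P) /\
      forget (B_ex P x y) = A_ex P /\ lp_nonselfref_provable (B_ex P x y)).
Proof.
  assert (Hex : forall P x y : nat,
      s4_thm (A_ex P) /\ ~ has_pcf_g3s_proof (A_ex P) /\
      forget (B_ex P x y) = A_ex P /\ lp_nonselfref_provable (B_ex P x y)).
  { intros P x y. split; [|split; [|split]].
    - apply A_ex_s4_thm.
    - apply A_ex_no_pcf_proof.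
    - apply forget_B_ex.
    - apply B_ex_lp_provable. }
  split.
  - exists (A_ex 0), (B_ex 0 0 1). apply Hex.
  - intros P x y _. apply Hex.
Qed.
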